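(* Let $G=(V,E)$ be a finite simple graph and $T\geq1$ an integer. If $(x,y,z)$ is a feasible solution of the Time Step Model $\mathrm{TSM}(G,T)$, then $C=\{v\in V\colon x^0_v=1\}$ is a zero forcing set of $G$ that is the initial set of some zero forcing game in $\mathcal{Z}(G,T)$, and $\mathrm{pt}(G,C)=\sum_{t\in[T]}z^t$.
   Context: Zero forcing: $n=|V|$, $N(u)$ is the neighborhood of $u$, $d(u)=|N(u)|$. Under the standard color change rule, a filled vertex $u$ can force a non-filled vertex $v$ if $v$ is the only non-filled neighbor of $u$. A zero forcing game on $G$ with initial set $C\subseteq V$ consists of sets $C^{(0)}=C^{[0]}=C$, sets $C^{(t)}$ (vertices forced at step $t$) with $C^{[t]}=C^{[t-1]}\cup C^{(t)}$, and a collection $\phi(C)$ of forces $u\to v$, such that every vertex lies in exactly one $C^{(t)}$, and each $v\in C^{(t)}$, $t\geq1$, is forced by exactly one neighbor $u$ such that $u$ and all neighbors of $u$ other than $v$ lie in $C^{[t-1]}$. $C$ is a zero forcing set if repeated forcing eventually fills all of $V$. The propagation time $\mathrm{pt}(G,C)$ is the smallest $t^*$ with $C^{[t^*]}=V$ when at each step all possible forces are applied simultaneously, i.e. $C^{(t)}$ is the set of all $v\notin C^{[t-1]}$ for which some $u\in C^{[t-1]}$ has $v$ as its unique neighbor outside $C^{[t-1]}$ ($\mathrm{pt}(G,C)=\infty$ if $C$ is not a zero forcing set). Here $\mathcal{Z}(G,T)$ denotes the family of zero forcing games on $G$ whose initial set is a zero forcing set, which use at most $T$ time steps, and in which at each time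 step all possible forces are applied (in the sense just described). Time Step Model: $A$ is the set of arcs containing $(u,v)$ and $(v,u)$ for each edge $\{u,v\}$, $[T]=\{1,\dots,T\}$. $\mathrm{TSM}(G,T)$ has binary variables $x^t_v$ ($v\in V$, $t\in\{0,\dots,T\}$), $y^t_a$ ($a\in A$, $t\in[T]$), $z^t$ ($t\in[T]$), with constraints: (1) $x^0_v+\sum_{t\in[T]}\sum_{a=(u,v)\in A}y^t_a=1$ for all $v$; (2) $y^t_a\leq x^{t-1}_u$ for all $a=(u,v)\in A$, $t\in[T]$; (3) $y^t_a\leq x^{t-1}_w$ for all $a=(u,v)\in A$, $w\in N(u)\setminus\{v\}$, $t\in[T]$; (4) $x^t_v=x^{t-1}_v+\sum_{a=(u,v)\in A}y^t_a$ for all $v$, $t\in[T]$; (5) $x^{t-1}_u-x^{t-1}_v+\sum_{w\in N(u)\setminus\{v\}}x^{t-1}_w\leq\sum_{a=(w,v)\in A}y^t_a+d(u)-1$ for all $(u,v)\in A$, $t\in[T]$; (6) $\frac1n\sum_{v\in V}(x^t_v-x^{t-1}_v)-z^t\leq0$ for all $t\in[T]$; (7) $z^t-\sum_{v\in V}(x^t_v-x^{t-1}_v)\leq 0$ for all $t\in[T]$. Its objective is to minimize $\sum_v x^0_v$. A feasible solution is one satisfying all constraints. *)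

From mathcomp Require Import all_boot all_order all_algebra.
Set Implicit Arguments. Unset Strict Implicit. Unset Printing Implicit Defensive.
Import Order.TTheory GRing.Theory Num.Theory.

Definition simple_graph (V : finType) (e : rel V) : Prop :=
  symmetric e /\ irreflexive e.

Definition nbhd (V : finType) (e : rel V) (u : V) : {set V} := [set w | e u w].
Definition deg (V : finType) (e : rel V) (u : V) : nat := #|nbhd e u|.

Definition can_force (V : finType) (e : rel V) (S : {set V}) (u v : V) : bool :=
  [&& u \in S, e u v, v \notin S &
      [forall w, (w \in nbhd e u) && (w != v) ==> (w \in S)]].

Definition forced_step (V : finType) (e : rel V) (S : {set V}) : {set V} :=
  [set v | [exists u, can_force e S u v]].

Fixpoint filled (V : finType) (e : rel V) (C : {set V}) (t : nat) : {set V} :=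
  match t with
  | 0 => C
  | t'.+1 => filled e C t' :|: forced_step e (filled e C t')
  end.

Definition zero_forcing_set (V : finType) (e : rel V) (C : {set V}) : Prop :=
  exists t, filled e C t = [set: V].

Definition prop_time_is (V : finType) (e : rel V) (C : {set V}) (k : nat) : Prop :=
  filled e C k = [set: V] /\ forall t, filled e C t = [set: V] -> (k <= t)%N.

(* A zero forcing game in Z(G,T) with initial set C:
   Cf t = C^(t) (vertices forced at step t), Cb t = C^[t] the union of Cf 0..t,
   forcer v = the unique vertex u with the force u -> v in phi(C). *)
Definition game_in_Z (V : finType) (e : rel V) (T : nat) (C : {set V}) : Prop :=
  zero_forcing_set e C /\
  exists (Cf : nat -> {set V}) (forcer : V -> V),
    let Cb := fun t => \bigcup_(s < t.+1) Cf s in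
    Cf 0 = C /\
        (forall v, exists t, v \in Cf t) /\
        (forall v t1 t2, v \in Cf t1 -> v \in Cf t2 -> t1 = t2) /\
        (forall t v, (1 <= t)%N -> v \in Cf t ->
            [/\ e (forcer v) v, forcer v \in Cb t.-1 &
                forall w, w \in nbhd e (forcer v) -> w != v -> w \in Cb t.-1]) /\
        (forall t, (1 <= t)%N -> Cf t = forced_step e (Cb t.-1)) /\
        (forall t, (T < t)%N -> Cf t = set0).

Local Open Scope ring_scope.

(* Feasibility for TSM(G,T). Binary variables are booleans, read as 0/1 in rat.
   x t v (t in 0..T), y t u v for the arc (u,v) (t in [T]), z t (t in [T]). *)
Definition TSM_feasible (V : finType) (e : rel V) (T : nat)
    (x : nat -> V -> bool) (y : nat -> V -> V -> bool) (z : nat -> bool) : Prop :=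
  let X t v : rat := (x t v)%:R in
  let Y t u v : rat := (y t u v)%:R in
  let Z t : rat := (z t)%:R in
  let n : rat := #|V|%:R in
  (* (1) *)
      (forall v, X 0%N v + \sum_(1 <= t < T.+1) \sum_(u | e u v) Y t u v = 1) /\
      (* (2) *)
      (forall u v t, e u v -> (1 <= t <= T)%N -> Y t u v <= X t.-1 u) /\
      (* (3) *)
      (forall u v w t, e u v -> w \in nbhd e u -> w != v -> (1 <= t <= T)%N ->
          Y t u v <= X t.-1 w) /\
      (* (4) *)
      (forall v t, (1 <= t <= T)%N ->
          X t v = X t.-1 v + \sum_(u | e u v) Y t u v) /\
      (* (5) *)
      (forall u v t, e u v -> (1 <= t <= T)%N ->
          X t.-1 u - X t.-1 v + \sum_(w in nbhd e u | w != v) X t.-1 w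
            <= \sum_(w | e w v) Y t w v + (deg e u)%:R - 1) /\
      (* (6) *)
      (forall t, (1 <= t <= T)%N ->
          n^-1 * \sum_(v : V) (X t v - X t.-1 v) - Z t <= 0) /\
      (* (7) *)
      (forall t, (1 <= t <= T)%N -> Z t - \sum_(v : V) (X t v - X t.-1 v) <= 0).

(* A feasible solution of TSM(G,T) is simultaneous propagation itself.
   Constraint (4) makes x^t monotone in t and gives every vertex first filled
   at step t an incoming arc with y^t = 1; by (2) and (3) the tail of such an
   arc can force its head, and by (5) every force possible at step t is
   carried by such an arc.  Hence x^t is the indicator of C^[t] for t <= T,
   and (1) gives x^T = 1.  Constraints (6) and (7) squeeze z^t between N_t/n
   and N_t, where N_t is the number of vertices filled at step t, so z^t = 1
   exactly at the steps before propagation stops; there are pt(G,C) of them. *)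

From mathcomp Require Import all_boot all_order all_algebra.
From mathcomp Require Import zify lra.
Set Implicit Arguments. Unset Strict Implicit. Unset Printing Implicit Defensive.
Import Order.TTheory GRing.Theory Num.Theory.

Section SimultaneousPropagation.
Variables (V : finType) (e : rel V) (C : {set V}).
Local Notation F := (filled e C).

Lemma forced_stepT : forced_step e [set: V] = set0.
Proof.
apply/setP => v; rewrite !inE; apply/existsP => -[u].
by rewrite /can_force !in_setT andbF.
Qed.

Lemma filled_subset s t : (s <= t)%N -> F s \subset F t.
Proof.
move=> /subnKC <-; elim: (t - s)%N => [|k IH]; first by rewrite addn0.
by rewrite addnS (subset_trans IH) ?subsetUl.
Qed.

Lemma filled_setT s t : F s = [set: V] -> (s <= t)%N -> F t = [set: V].
Proof. by move=> Fs st; apply/eqP; rewrite eqEsubset subsetT -Fs filled_subset. Qed.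

Lemma filled_stable s t : F s.+1 = F s -> (s <= t)%N -> F t = F s.
Proof.
move=> Fs /subnKC <-; elim: (t - s)%N => [|k IH]; first by rewrite addn0.
by rewrite addnS /= IH.
Qed.

Lemma sum_nat_leq n m : (\sum_(1 <= t < n.+1) (t <= m))%N = minn n m.
Proof.
elim: n => [|n IH]; first by rewrite big_geq ?min0n.
by rewrite big_nat_recr //= IH; case: (leqP n.+1 m) => /= h; lia.
Qed.

Lemma prop_time_sum_changes T : F T = [set: V] ->
  prop_time_is e C (\sum_(1 <= t < T.+1) (F t != F t.-1)).
Proof.
move=> FT; have FT' : exists t, F t == [set: V] by exists T; rewrite FT.
have [m /eqP Fm m_min] := ex_minnP FT'.
have mT : (m <= T)%N by rewrite m_min ?FT.
have changedE t : (0 < t)%N -> (F t != F t.-1) = (t <= m)%N.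
  move=> t_gt0; case: leqP => [tm | mt].
  - apply/eqP => stuck.
    have Ft1 : F t.-1 = [set: V].
      by rewrite -Fm (@filled_stable t.-1 m) ?prednK //; lia.
    by have := m_min _ (introT eqP Ft1); lia.
  - by rewrite !(filled_setT Fm) ?eqxx //; lia.
under eq_big_nat => t /andP [t_gt0 _] do rewrite changedE //.
rewrite sum_nat_leq (minn_idPr mT).
by split=> // t Ft; rewrite m_min ?Ft.
Qed.

Definition forced_at (t : nat) : {set V} :=
  if t is s.+1 then forced_step e (F s) else C.

Lemma bigcup_forced_at t : \bigcup_(s < t.+1) forced_at s = F t.
Proof. by elim: t => [|t IH]; rewrite ?big_ord1 // big_ord_recr /= IH. Qed.

Lemma forced_at_filled t v : v \in forced_at t -> v \in F t.
Proof.
by rewrite -bigcup_forced_at; apply/subsetP/(bigcup_sup (Ordinal (ltnSn t))).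
Qed.

Lemma forced_at_new t v : v \in forced_at t.+1 -> v \notin F t.
Proof. by rewrite inE => /existsP [u /and4P []]. Qed.

Lemma forced_at_uniq v s t : v \in forced_at s -> v \in forced_at t -> s = t.
Proof.
wlog st : s t / (s < t)%N => [ih vs vt|].
  by case: (ltngtP s t) => // [/ih|/ih]; [apply | move=> /(_ vt vs)].
move=> /forced_at_filled vs vt; exfalso.
have t_gt0 : (0 < t)%N by apply: leq_ltn_trans st.
move: vt; rewrite -(prednK t_gt0) => /forced_at_new /negP; apply.
by apply: subsetP vs; apply: filled_subset; rewrite -ltnS prednK.
Qed.

Lemma can_force_forced_at s u v : can_force e (F s) u v -> v \in forced_at s.+1.
Proof. by move=> uv; rewrite inE; apply/existsP; exists u. Qed.

Lemma forced_at_set0 T t : F T = [set: V] -> (T < t)%N -> forced_at t = set0.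
Proof. by case: t => //= t FT Tt; rewrite (filled_setT FT Tt) forced_stepT. Qed.

Lemma game_in_Z_filled T : F T = [set: V] -> game_in_Z e T C.
Proof.
move=> FT; split; first by exists T.
pose forcer v := odflt v [pick u | [exists s : 'I_T, can_force e (F s) u v]].
exists forced_at, forcer => /=; split=> //; split.
  move=> v; have : v \in F T by rewrite FT inE.
  by rewrite -bigcup_forced_at => /bigcupP [s _ vs]; exists s.
split; first exact: forced_at_uniq.
split; last split; last by move=> t; apply: forced_at_set0.
- case=> // t v _ vt; rewrite bigcup_forced_at /=.
  have tT : (t < T)%N.
    by rewrite ltnNge; apply: contraTN vt => Tt; rewrite (forced_at_set0 FT) ?inE.
  have [u0 f0] : exists u, can_force e (F t) u v by move: vt; rewrite inE => /existsP.
  rewrite /forcer; case: pickP => [u /existsP [s fs] | none] /=; last first.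
    by have /existsP [] := negbT (none u0); exists (Ordinal tT).
  have st : s = t :> nat.
    by apply: succn_inj; apply: forced_at_uniq (can_force_forced_at fs) vt.
  rewrite st in fs; case/and4P: fs => uS euv _ /forallP nb.
  by split=> // w wn wv; apply: (implyP (nb w)); rewrite wn.
- by case=> // t _; rewrite bigcup_forced_at.
Qed.

End SimultaneousPropagation.

Section TimeStepModel.
Variables (V : finType) (e : rel V) (T : nat).
Variables (x : nat -> V -> bool) (y : nat -> V -> V -> bool) (z : nat -> bool).
Hypothesis feasible : TSM_feasible e T x y z.

Local Open Scope ring_scope.
Local Notation X t v := ((x t v)%:R : rat).
Local Notation indeg t v := (\sum_(u | e u v) ((y t u v)%:R : rat)).
Local Notation C := [set v | x 0%N v].

Lemma indeg_ge0 t v : 0 <= indeg t v.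
Proof. by apply: sumr_ge0 => u _; rewrite ler0n. Qed.

Lemma indeg_ge1 t u v : e u v -> y t u v -> 1 <= indeg t v.
Proof.
move=> euv yuv; rewrite (bigD1 u) //= yuv lerDl.
by apply: sumr_ge0 => w _; rewrite ler0n.
Qed.

Lemma indeg_gt0 t v : 0 < indeg t v -> exists2 u, e u v & y t u v.
Proof.
rewrite lt_def psumr_neq0 => [|u _]; last by rewrite ler0n.
case/andP=> /hasP [u _ /andP [euv yuv]] _.
by exists u; rewrite // ltr0n lt0b in yuv.
Qed.

Lemma x_step t v : (1 <= t <= T)%N -> X t v = X t.-1 v + indeg t v.
Proof. by case: feasible => _ [_ [_ [c4 _]]]; apply: c4. Qed.

Lemma x_mono t v : (1 <= t <= T)%N -> x t.-1 v -> x t v.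
Proof.
move=> tT xv; have := x_step v tT; have := indeg_ge0 t v.
by rewrite xv; case: (x t v) => //=; lra.
Qed.

Lemma y_head_new t u v : (1 <= t <= T)%N -> e u v -> y t u v ->
  ~~ x t.-1 v && x t v.
Proof.
move=> tT euv yuv; have := x_step v tT; have := indeg_ge1 euv yuv.
by case: (x t v); case: (x t.-1 v) => /=; lra.
Qed.

Lemma x_new_head t v : (1 <= t <= T)%N -> x t v -> ~~ x t.-1 v ->
  exists2 u, e u v & y t u v.
Proof.
move=> tT xv xv'; apply: indeg_gt0; have := x_step v tT.
by rewrite xv (negbTE xv') /=; lra.
Qed.

Lemma y_can_force t u v : (1 <= t <= T)%N -> e u v -> y t u v ->
  can_force e [set w | x t.-1 w] u v.
Proof.
case: feasible => _ [c2 [c3 _]] tT euv yuv.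
have filled_of w : 1 <= X t.-1 w -> x t.-1 w by case: (x t.-1 w); rewrite ?ler10.
have /andP [xv _] := y_head_new tT euv yuv.
rewrite /can_force !inE euv xv filled_of ?(le_trans _ (c2 _ _ _ euv tT)) ?yuv //=.
apply/forallP => w; apply/implyP => /andP [wu wv]; rewrite inE filled_of //.
by rewrite (le_trans _ (c3 _ _ _ _ euv wu wv tT)) ?yuv.
Qed.

Lemma can_force_y t u v : (1 <= t <= T)%N ->
  can_force e [set w | x t.-1 w] u v -> exists2 w, e w v & y t w v.
Proof.
case: feasible => _ [_ [_ [_ [c5 _]]]] tT /and4P [xu euv xv /forallP nb].
rewrite !inE in xu xv; apply: indeg_gt0.
(* (5) at the possible force u -> v reads deg u <= indeg v + deg u - 1. *)
have := c5 _ _ _ euv tT; rewrite xu (negbTE xv).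
have -> : \sum_(w in nbhd e u | w != v) X t.-1 w
          = \sum_(w in nbhd e u | w != v) 1.
  by apply: eq_bigr => w wuv; have := implyP (nb w) wuv; rewrite inE => ->.
have -> : (deg e u)%:R = \sum_(w in nbhd e u) 1 :> rat by rewrite sumr_const.
by rewrite [s in _ <= _ + s - _](bigD1 v) ?inE //=; lra.
Qed.

Lemma TSM_filledE t : (t <= T)%N -> filled e C t = [set v | x t v].
Proof.
elim: t => [|t IH] tT; first by [].
have tT' : (1 <= t.+1 <= T)%N by [].
rewrite /= (IH (ltnW tT)); apply/setP => v; rewrite !inE; apply/idP/idP.
- case/orP => [|/existsP [u /(can_force_y tT') [w ewv]]]; first exact: (x_mono tT').
  by move=> /(y_head_new tT' ewv) /andP [].
- move=> xv; case xv': (x t v) => //=; apply/existsP.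
  have [u euv yuv] := x_new_head tT' xv (negbT xv').
  by exists u; apply: y_can_force tT' euv yuv.
Qed.

Lemma x_T v : x T v.
Proof.
have telescope t : (t <= T)%N -> X t v = X 0%N v + \sum_(1 <= s < t.+1) indeg s v.
  elim: t => [|t IH] tT; first by rewrite big_geq ?addr0.
  by rewrite big_nat_recr //= addrA -(IH (ltnW tT)) x_step.
case: feasible => c1 _; have := telescope T (leqnn T); rewrite c1.
by case: (x T v) => // /eqP; rewrite eq_sym oner_eq0.
Qed.

Lemma z_newE t : (1 <= t <= T)%N -> z t = [exists v, x t v && ~~ x t.-1 v].
Proof.
case: feasible => _ [_ [_ [_ [_ [c6 c7]]]]] tT.
have incr_new v : X t v - X t.-1 v = (x t v && ~~ x t.-1 v)%:R.
  by case xv: (x t.-1 v); rewrite ?(x_mono tT xv) ?subrr ?subr0 ?andbT.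
have incr_sum : \sum_v (X t v - X t.-1 v) = \sum_v (x t v && ~~ x t.-1 v)%:R.
  by apply: eq_bigr => v _; apply: incr_new.
have := c7 _ tT; have := c6 _ tT; rewrite !incr_sum => {c6 c7} c6 c7.
case: (boolP [exists v, _]) => [/existsP [v new] | /existsPn none].
- have inv_n_gt0 : 0 < #|V|%:R^-1 :> rat.
    by rewrite invr_gt0 ltr0n; apply/card_gt0P; exists v.
  have : 1 <= \sum_w (x t w && ~~ x t.-1 w)%:R :> rat.
    by rewrite (bigD1 v) //= new lerDl sumr_ge0 // => w _; rewrite ler0n.
  move=> /(lt_le_trans ltr01) /(mulr_gt0 inv_n_gt0).
  by move: c6; case: (z t) => //=; lra.
- move: c7; rewrite big1 => [|w _]; last by rewrite (negbTE (none w)).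
  by case: (z t); rewrite ?subr0 ?ler10.
Qed.

Lemma z_filled_changed t : (1 <= t <= T)%N ->
  z t = (filled e C t != filled e C t.-1).
Proof.
move=> tT; have /andP [_ tT'] := tT.
rewrite z_newE // !TSM_filledE ?(leq_trans (leq_pred t)) //.
have sub : [set w | x t.-1 w] \subset [set w | x t w].
  by apply/subsetP => w; rewrite !inE; apply: x_mono.
apply/existsP/idP => [[v /andP [xv xv']] | neq].
  by apply/eqP => /setP /(_ v); rewrite !inE xv (negbTE xv').
have : ~~ ([set w | x t w] \subset [set w | x t.-1 w]).
  by rewrite eqEsubset sub andbT in neq.
by case/subsetPn => w; rewrite !inE => xw xw'; exists w; rewrite xw.
Qed.

End TimeStepModel.

Theorem theorem4p2 (V : finType) (e : rel V) (T : nat)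
    (x : nat -> V -> bool) (y : nat -> V -> V -> bool) (z : nat -> bool) :
  simple_graph e -> (1 <= T)%N -> TSM_feasible e T x y z ->
  let C := [set v | x 0%N v] in
  [/\ zero_forcing_set e C, game_in_Z e T C &
      prop_time_is e C (\sum_(1 <= t < T.+1) (z t : nat))%N].
Proof.
move=> _ _ feasible C.
have FT : filled e C T = [set: V].
  by apply/setP => v; rewrite /C (TSM_filledE feasible) // !inE (x_T feasible).
under eq_big_nat => t tT do rewrite (z_filled_changed feasible tT).
by split; [exists T | apply: game_in_Z_filled | apply: prop_time_sum_changes].
Qed.
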